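(* Let $g\ne0$ be a real $M_1\times M_2$ matrix with singular value decomposition $g=VSW^T$, let $d$ be the multiplicity of the largest singular value $\|g\|_2$, and let $V^d,W^d$ be as in the context. If $$\|V^d_{i,*}\|=\sqrt{d/M_1}\ \ \forall i\in\{1,\dots,M_1\}\quad\text{and}\quad \|W^d_{j,*}\|=\sqrt{d/M_2}\ \ \forall j\in\{1,\dots,M_2\},$$ then there exist finite-dimensional Hilbert spaces $\mathcal H_1,\mathcal H_2$, a state $\rho$ on $\mathcal H_1\otimes\mathcal H_2$ and observables $\mathcal A_i(x_i)$ (Hermitian, eigenvalues in $[-1,1]$) with $\sum_{x_1,x_2} g_{x_1,x_2}\operatorname{tr}(\rho\,\mathcal A_1(x_1)\otimes\mathcal A_2(x_2))=\sqrt{M_1M_2}\,\|g\|_2$; i.e. the bound of Theorem 1 is tight for $g$.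
   Context: $\|g\|_2$ is the largest singular value of $g$. Singular value decomposition: $V$ orthogonal $M_1\times M_1$, $W$ orthogonal $M_2\times M_2$, $S$ diagonal $M_1\times M_2$ with nonnegative nonincreasing diagonal, $g=VSW^T$. $V^d$ (resp. $W^d$) consists of the first $d$ columns of $V$ (resp. $W$); $A_{i,*}$ denotes the $i$-th row of a matrix $A$ as a column vector. Theorem 1 states $\sum_{x_1,x_2}g_{x_1,x_2}E(x_1,x_2)\le\sqrt{M_1M_2}\|g\|_2$ for all quantum strategies. *)

(* Complex numbers: an arbitrary numClosedFieldType C
   (e.g. algC, or C itself); real numbers = elements with x \is Num.real. *)
From HB Require Import structures.
From mathcomp Require Import all_boot all_order all_algebra.
Set Implicit Arguments. Unset Strict Implicit. Unset Printing Implicit Defensive.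
Import Order.TTheory GRing.Theory Num.Theory.
Local Open Scope ring_scope.

Section Defs.
Variable C : numClosedFieldType.

(* decoding of a tensor-product index k : 'I_(m*n) into a pair (i, j),
   inverse of mathcomp's mxvec_index *)
Definition unpair_index m n (k : 'I_(m * n)) : 'I_m * 'I_n :=
  enum_val (cast_ord (esym (mxvec_cast m n)) k).

Definition kron m1 n1 m2 n2 (A : 'M[C]_(m1, n1)) (B : 'M[C]_(m2, n2))
  : 'M[C]_(m1 * m2, n1 * n2) :=
  \matrix_(k, l) (A (unpair_index k).1 (unpair_index l).1
                  * B (unpair_index k).2 (unpair_index l).2).

Definition adjmx m n (A : 'M[C]_(m, n)) : 'M[C]_(n, m) := (map_mx Num.conj A)^T.

Definition hermitian n (A : 'M[C]_n) := adjmx A = A.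

Definition psd n (A : 'M[C]_n) :=
  hermitian A /\ forall v : 'cV[C]_n, 0 <= (adjmx v *m A *m v) 0 0.

Definition is_state n (rho : 'M[C]_n) := psd rho /\ \tr rho = 1.

Definition is_observable n (A : 'M[C]_n) :=
  hermitian A /\ forall a : C, eigenvalue A a -> -1 <= a <= 1.

Definition real_mx m n (A : 'M[C]_(m, n)) := forall i j, A i j \is Num.real.

Definition orthogonal_mx n (V : 'M[C]_n) := real_mx V /\ V^T *m V = 1%:M.

Definition diag_rect M1 M2 (sigma : nat -> C) : 'M[C]_(M1, M2) :=
  \matrix_(i, j) (if (i : nat) == j then sigma i else 0).

Definition is_svd M1 M2 (g : 'M[C]_(M1, M2)) (V : 'M[C]_M1) (sigma : nat -> C)
  (W : 'M[C]_M2) :=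
  [/\ orthogonal_mx V, orthogonal_mx W,
      forall k, (k < minn M1 M2)%N -> 0 <= sigma k /\ sigma k \is Num.real,
      forall k l, (k <= l < minn M1 M2)%N -> sigma l <= sigma k
    & g = V *m diag_rect M1 M2 sigma *m W^T].

Definition top_multiplicity M1 M2 (sigma : nat -> C) : nat :=
  count (fun k => sigma k == sigma 0%N) (iota 0 (minn M1 M2)).

Definition row_trunc_norm m (V : 'M[C]_m) (d : nat) (i : 'I_m) : C :=
  sqrtC (\sum_(k < m | (k < d)%N) `|V i k| ^+ 2).

End Defs.

From HB Require Import structures.
From mathcomp Require Import all_boot all_order all_algebra.
From mathcomp Require Import ring.
Set Implicit Arguments. Unset Strict Implicit. Unset Printing Implicit Defensive.
Import Order.TTheory GRing.Theory Num.Theory.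
Local Open Scope ring_scope.

(* The bound sqrt(M1 M2) ||g||_2 of Theorem 1 is attained by
   "Clifford vector" observables in a maximally entangled state.
   - On C^n (x) C^n the maximally entangled state rho_n satisfies
     tr (rho_n (X (x) Y)) = tr (X Y^T) / n.
   - On C^(2^D) (functions of D bits) the signed bit flips G_0, ..., G_(D-1)
     (Jordan-Wigner matrices) are real symmetric involutions that pairwise
     anticommute; hence for a real unit vector f the matrix
     Op f = sum_k f_k G_k is an observable, and in rho_(2^D) the correlation of
     Op f and Op h is the inner product <f, h>.
   - If g = V S W^T is an SVD whose top singular value sigma_0 has multiplicity
     d, then sigma_k = sigma_0 for k < d, so the first d columns satisfy
     g W^d = sigma_0 V^d.
   Corollary 1 takes D = d, A1(x1) = Op (sqrt(M1/d) V^d_x1) and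
   A2(x2) = Op (sqrt(M2/d) W^d_x2), which are observables by the row-norm
   hypotheses; the Bell value is then sqrt(M1 M2)/d * sigma_0 * sum_x1 |V^d_x1|^2
   = sqrt(M1 M2) sigma_0. *)

Lemma unpair_index_bij m n : bijective (@unpair_index m n).
Proof.
rewrite /unpair_index; apply: (bij_comp (enum_val_bij _)).
by exists (cast_ord (mxvec_cast m n)) => k; apply: val_inj.
Qed.

Section MaximallyEntangled.
Variable C : numClosedFieldType.

Lemma sum_unpair m n (F : 'I_m * 'I_n -> C) :
  \sum_k F (unpair_index k) = \sum_p F p.
Proof.
rewrite [RHS](reindex (@unpair_index m n)) //.
exact: onW_bij (unpair_index_bij m n).
Qed.

Lemma sum_delta n (a : 'I_n) (F : 'I_n -> C) : \sum_b (a == b)%:R * F b = F a.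
Proof.
rewrite (bigD1 a) //= eqxx mul1r big1 ?addr0 // => b /negbTE.
by rewrite eq_sym => ->; rewrite mul0r.
Qed.

(* Coordinates of the unnormalized maximally entangled vector sum_a e_a (x) e_a. *)
Definition diag_indicator n (k : 'I_(n * n)) : C :=
  ((unpair_index k).1 == (unpair_index k).2)%:R.

Definition maxent n : 'M[C]_(n * n) :=
  \matrix_(k, l) (diag_indicator k * diag_indicator l / n%:R).

Lemma diag_indicator_real n (k : 'I_(n * n)) : diag_indicator k \is Num.real.
Proof. exact: realn. Qed.

Lemma diag_indicator_idem n (k : 'I_(n * n)) :
  diag_indicator k * diag_indicator k = diag_indicator k.
Proof. by rewrite /diag_indicator; case: eqP; rewrite ?mulr0 ?mulr1. Qed.

Lemma tr_maxent_kron n (X Y : 'M[C]_n) :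
  \tr (maxent n *m kron X Y) = \tr (X *m Y^T) / n%:R.
Proof.
pose u := @unpair_index n n.
(* Expand both tensor indices into pairs; the state contributes
   delta_ab delta_ce / n, leaving sum_(a,c) X c a * Y c a. *)
have -> : \tr (maxent n *m kron X Y) = \sum_k \sum_l
   (((u k).1 == (u k).2)%:R * ((u l).1 == (u l).2)%:R / n%:R) *
   (X (u l).1 (u k).1 * Y (u l).2 (u k).2).
  by apply: eq_bigr => k _; rewrite !mxE; apply: eq_bigr => l _; rewrite !mxE.
rewrite (sum_unpair (fun p => \sum_l ((p.1 == p.2)%:R * ((u l).1 == (u l).2)%:R
   / n%:R) * (X (u l).1 p.1 * Y (u l).2 p.2))).
under eq_bigr do rewrite (sum_unpair (fun q => ((_ : 'I_n * 'I_n).1 == _.2)%:R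
   * (q.1 == q.2)%:R / n%:R * (X q.1 _.1 * Y q.2 _.2))).
transitivity (\sum_a \sum_b \sum_c \sum_e
  ((a == b)%:R * ((c == e)%:R * (X c a * Y e b / n%:R)))).
  rewrite [RHS]pair_bigA /=; apply: eq_bigr => p _.
  rewrite [RHS]pair_bigA /=; apply: eq_bigr => q _.
  by rewrite mulrA mulrA mulrAC -!mulrA.
under eq_bigr do under eq_bigr do under eq_bigr do rewrite -mulr_sumr.
under eq_bigr do under eq_bigr do rewrite -mulr_sumr.
under eq_bigr do rewrite sum_delta.
under eq_bigr do under eq_bigr do rewrite sum_delta.
rewrite /mxtrace exchange_big mulr_suml; apply: eq_bigr => a _.
rewrite mxE mulr_suml; apply: eq_bigr => b _.
by rewrite mxE.
Qed.

Lemma maxent_state n : (0 < n)%N -> is_state (maxent n).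
Proof.
move=> n_gt0; split; first split.
- apply/matrixP => k l; rewrite !mxE conj_Creal.
    by rewrite (mulrC (diag_indicator l)).
  by rewrite rpredM ?rpredV ?rpredM ?realn ?diag_indicator_real.
- move=> v; set z := \sum_l diag_indicator l * v l 0.
  have -> : (adjmx v *m maxent n *m v) 0 0 = z^* * z / n%:R.
    have -> : z^* = \sum_k diag_indicator k * (v k 0)^*.
      rewrite /z rmorph_sum; apply: eq_bigr => k _.
      by rewrite rmorphM /= (conj_Creal (diag_indicator_real k)).
    rewrite !mxE; under eq_bigr do rewrite !mxE.
    under eq_bigr do under eq_bigr do rewrite !mxE.
    rewrite mulrAC mulr_sumr; apply: eq_bigr => l _.
    rewrite !mulr_suml; apply: eq_bigr => k _.
    ring.
  by rewrite (mulrC z^*) -normCK divr_ge0 ?exprn_ge0 ?ler0n.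
- rewrite /mxtrace; under eq_bigr do rewrite mxE diag_indicator_idem.
  rewrite -mulr_suml (sum_unpair (fun p => (p.1 == p.2)%:R)).
  rewrite -(pair_bigA _ (fun a b => (a == b)%:R)) /=.
  have row_sum (a : 'I_n) : \sum_b ((a == b)%:R : C) = 1.
    rewrite -[RHS](sum_delta a (fun _ => 1)).
    by apply: eq_bigr => b _; rewrite mulr1.
  under eq_bigr do rewrite row_sum.
  by rewrite sumr_const card_ord -[1 *+ n]/(n%:R) divff // pnatr_eq0 -lt0n.
Qed.

End MaximallyEntangled.

Section Clifford.
Variables (C : numClosedFieldType) (D : nat).

(* Basis states of (C^2)^(x)D are indexed by D-bit strings. *)
Definition bits := {ffun 'I_D -> bool}.
Definition cdim := #|{: bits}|.

Lemma cdim_gt0 : (0 < cdim)%N.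
Proof. by apply/card_gt0P; exists [ffun=> false]. Qed.

Definition flip (k : 'I_D) (x : bits) : bits :=
  [ffun i => if i == k then ~~ x i else x i].

Definition jw_sign (k : 'I_D) (x : bits) : C :=
  \prod_(i : 'I_D | (i < k)%N) (if x i then -1 else 1).

Definition clifford_entry k (x y : bits) : C :=
  if y == flip k x then jw_sign k x else 0.

Definition clifford_gen k : 'M[C]_cdim :=
  \matrix_(i, j) clifford_entry k (enum_val i) (enum_val j).

Lemma sum_enum_val (F : bits -> C) : \sum_(i < cdim) F (enum_val i) = \sum_t F t.
Proof.
rewrite [RHS](reindex (fun i : 'I_cdim => enum_val i)) //.
exact: onW_bij (enum_val_bij _).
Qed.

Lemma flipK k : involutive (flip k).
Proof. by move=> x; apply/ffunP => i; rewrite !ffunE; case: eqP => //; rewrite negbK. Qed.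

Lemma flipC k l x : flip k (flip l x) = flip l (flip k x).
Proof. by apply/ffunP => i; rewrite !ffunE; case: eqP; case: eqP. Qed.

Lemma jw_sign_flip_ge (k m : 'I_D) x : (k <= m)%N -> jw_sign k (flip m x) = jw_sign k x.
Proof.
move=> km; apply: eq_bigr => i ik; rewrite ffunE; case: eqP => // E.
by move: ik; rewrite E ltnNge km.
Qed.

Lemma jw_sign_flip_lt (k l : 'I_D) x : (k < l)%N -> jw_sign l (flip k x) = - jw_sign l x.
Proof.
move=> kl; rewrite /jw_sign (bigD1 k) //= [in RHS](bigD1 k) //= ffunE eqxx.
rewrite -mulNr; congr (_ * _); first by case: (x k); rewrite ?opprK.
by apply: eq_bigr => i /andP[_ ik]; rewrite ffunE (negbTE ik).
Qed.

Lemma jw_sign_sq k x : jw_sign k x * jw_sign k x = 1.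
Proof. by rewrite -big_split big1 // => i _; case: (x i); rewrite /= ?mulrNN ?mulr1. Qed.

Lemma jw_sign_real k x : jw_sign k x \is Num.real.
Proof.
apply: (big_ind (fun y : C => y \is Num.real)) => [|a b|i _].
- exact: real1.
- exact: rpredM.
- by case: (x i); rewrite ?realN real1.
Qed.

Lemma clifford_mul_entry k l i j : (clifford_gen k *m clifford_gen l) i j =
  jw_sign k (enum_val i) * clifford_entry l (flip k (enum_val i)) (enum_val j).
Proof.
rewrite mxE (eq_bigr (fun y => clifford_entry k (enum_val i) (enum_val y)
  * clifford_entry l (enum_val y) (enum_val j))); last by move=> y _; rewrite !mxE.
rewrite (sum_enum_val (fun t => clifford_entry k (enum_val i) t
  * clifford_entry l t (enum_val j))).
rewrite (bigD1 (flip k (enum_val i))) //= /clifford_entry eqxx big1 ?addr0 //.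
by move=> t /negbTE ->; rewrite mul0r.
Qed.

Lemma clifford_sq k : clifford_gen k *m clifford_gen k = 1%:M.
Proof.
apply/matrixP => i j; rewrite clifford_mul_entry mxE /clifford_entry flipK.
rewrite jw_sign_flip_ge //.
have -> : (enum_val j == enum_val i) = (i == j).
  by rewrite eq_sym; apply/eqP/eqP => [/enum_val_inj|->].
by case: eqP => _; rewrite ?mulr0 ?jw_sign_sq.
Qed.

Lemma clifford_anticomm (k l : 'I_D) : k != l ->
  clifford_gen k *m clifford_gen l = - (clifford_gen l *m clifford_gen k).
Proof.
wlog kl : k l / (k < l)%N => [hwlog k_neq_l|_].
  case: (ltngtP k l) => [lt|lt|/val_inj E].
  - exact: hwlog.
  - by rewrite (hwlog l k) ?opprK // eq_sym.
  - by move: k_neq_l; rewrite E eqxx.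
apply/matrixP => i j; rewrite clifford_mul_entry [RHS]mxE clifford_mul_entry.
rewrite /clifford_entry flipC jw_sign_flip_lt // jw_sign_flip_ge ?(ltnW kl) //.
by case: eqP => _; rewrite ?mulr0 ?oppr0 // mulrN mulrC.
Qed.

Lemma clifford_sym k : (clifford_gen k)^T = clifford_gen k.
Proof.
apply/matrixP => i j; rewrite !mxE /clifford_entry.
set x := enum_val i; set y := enum_val j.
have -> : (x == flip k y) = (y == flip k x) by apply/eqP/eqP => ->; rewrite flipK.
by case: eqP => // ->; rewrite jw_sign_flip_ge.
Qed.

Lemma clifford_real k i j : clifford_gen k i j \is Num.real.
Proof. by rewrite mxE /clifford_entry; case: eqP => _; rewrite ?jw_sign_real ?real0. Qed.

Definition clifford_op (f : 'I_D -> C) : 'M[C]_cdim := \sum_(k < D) f k *: clifford_gen k.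

Lemma clifford_op_anticomm f h :
  clifford_op f *m clifford_op h + clifford_op h *m clifford_op f
  = (2 * \sum_k f k * h k) *: 1%:M.
Proof.
have expand f' h' : clifford_op f' *m clifford_op h'
    = \sum_k \sum_l (f' k * h' l) *: (clifford_gen k *m clifford_gen l).
  rewrite /clifford_op mulmx_suml; apply: eq_bigr => k _.
  rewrite mulmx_sumr; apply: eq_bigr => l _.
  by rewrite -scalemxAl -scalemxAr scalerA.
rewrite !expand [X in _ + X]exchange_big -big_split /=.
rewrite mulr_sumr scaler_suml; apply: eq_bigr => k _.
rewrite -big_split /=; under eq_bigr do rewrite (mulrC (h _)) -scalerDr.
rewrite (bigD1 k) //= big1 ?addr0.
  by rewrite clifford_sq -mulr2n -scaler_nat scalerA mulrC.
by move=> l lk; rewrite clifford_anticomm 1?eq_sym // addNr scaler0.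
Qed.

Lemma clifford_op_sq f : clifford_op f *m clifford_op f = (\sum_k f k ^+ 2) *: 1%:M.
Proof.
have := clifford_op_anticomm f f; rewrite -mulr2n -scaler_nat.
move/(congr1 (fun M => 2^-1 *: M)).
rewrite !scalerA mulKf ?pnatr_eq0 // mulVf ?pnatr_eq0 // scale1r => ->.
by congr (_ *: _); apply: eq_bigr => k _; rewrite expr2.
Qed.

Lemma clifford_op_tr f h :
  \tr (clifford_op f *m clifford_op h) = (\sum_k f k * h k) * cdim%:R.
Proof.
have := congr1 mxtrace (clifford_op_anticomm f h).
rewrite mxtraceD (mxtrace_mulC (clifford_op h)) mxtraceZ mxtrace1 -mulr2n.
rewrite -mulr_natl -mulrA mulr1 -mulr_natl => E.
by apply: (@mulfI _ 2%:R); rewrite ?pnatr_eq0 // mulr_natl E mulr1.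
Qed.

Lemma clifford_op_sym f : (clifford_op f)^T = clifford_op f.
Proof.
apply/matrixP => i j; rewrite mxE !summxE; apply: eq_bigr => k _.
have := congr1 (fun M : 'M[C]_cdim => M i j) (clifford_sym k).
by rewrite !mxE => ->.
Qed.

Lemma clifford_op_real f : (forall k, f k \is Num.real) -> real_mx (clifford_op f).
Proof.
move=> f_real i j; rewrite summxE rpred_sum // => k _.
by rewrite mxE rpredM ?clifford_real.
Qed.

(* For a real unit vector f, Op f is Hermitian and squares to the identity,
   so its eigenvalues are +-1. *)
Lemma clifford_op_observable f :
  (forall k, f k \is Num.real) -> \sum_k f k ^+ 2 = 1 -> is_observable (clifford_op f).
Proof.
move=> f_real f_unit; split.
  apply/matrixP => i j; rewrite !mxE conj_Creal ?clifford_op_real //.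
  by rewrite -[in RHS](clifford_op_sym f) mxE.
move=> a /eigenvalueP [v vA v_nz].
have : v *m (clifford_op f *m clifford_op f) = (a ^+ 2) *: v.
  by rewrite mulmxA vA -scalemxAl vA scalerA expr2.
rewrite clifford_op_sq f_unit scale1r mulmx1 => /eqP.
rewrite -subr_eq0 -{1}[v]scale1r -scalerBl scaler_eq0 (negbTE v_nz) orbF.
rewrite subr_eq0 eq_sym sqrf_eq1 => /orP[] /eqP ->;
  by rewrite lexx (le_trans (lerN10 _) ler01).
Qed.

Lemma clifford_correlation f h :
  \tr (maxent C cdim *m kron (clifford_op f) (clifford_op h)) = \sum_k f k * h k.
Proof.
rewrite tr_maxent_kron clifford_op_sym clifford_op_tr.
by rewrite mulfK // pnatr_eq0 -lt0n cdim_gt0.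
Qed.

End Clifford.

Lemma count_iota_prefix m (P : pred nat) :
  (forall k l, (l <= k)%N -> (k < m)%N -> P k -> P l) ->
  forall k, (k < count P (iota 0 m))%N -> P k.
Proof.
elim: m => [//|m IH] P_down k.
rewrite -[m.+1]addn1 iotaD add0n count_cat /= addn0.
have P_down' k' l : (l <= k')%N -> (k' < m)%N -> P k' -> P l.
  by move=> lk km; apply: P_down lk (ltnW _); rewrite ltnS.
case Pm: (P m) => /=; last by rewrite addn0; apply: IH.
move=> k_lt; apply: (P_down m) => //.
have := count_size P (iota 0 m); rewrite size_iota => cnt_le.
by rewrite -ltnS (leq_trans k_lt) // addn1 ltnS.
Qed.

Section TopSingularBlock.
Variables (C : numClosedFieldType) (M1 M2 : nat).
Variables (g : 'M[C]_(M1, M2)) (V : 'M[C]_M1) (sigma : nat -> C) (W : 'M[C]_M2).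
Hypothesis svd : is_svd g V sigma W.

Let d := top_multiplicity M1 M2 sigma.

Lemma top_multiplicity_le_min : (d <= minn M1 M2)%N.
Proof. by rewrite /d /top_multiplicity -[X in (_ <= X)%N](size_iota 0) count_size. Qed.

Lemma top_multiplicity_gt0 : (0 < M1)%N -> (0 < M2)%N -> (0 < d)%N.
Proof.
move=> M1_gt0 M2_gt0; rewrite /d /top_multiplicity -has_count.
by apply/hasP; exists 0%N; rewrite ?mem_iota ?add0n ?leq_min ?M1_gt0.
Qed.

(* Singular values are nonincreasing, so the top value fills [0, d). *)
Lemma sigma_top k : (k < d)%N -> sigma k = sigma 0%N.
Proof.
case: svd => _ _ _ sigma_dec _; move=> k_lt; apply/eqP; move: k k_lt.
apply: count_iota_prefix => k l lk km /eqP sk.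
have sl_le : sigma l <= sigma 0%N.
  by apply: sigma_dec; rewrite leq0n (leq_ltn_trans lk km).
have sk_le : sigma k <= sigma l by apply: sigma_dec; rewrite lk km.
by rewrite eq_le sl_le -sk sk_le.
Qed.

Lemma top_multiplicity_le1 : (d <= M1)%N.
Proof. exact: leq_trans top_multiplicity_le_min (geq_minl _ _). Qed.

Lemma top_multiplicity_le2 : (d <= M2)%N.
Proof. exact: leq_trans top_multiplicity_le_min (geq_minr _ _). Qed.

Lemma svd_top_columns i (k : 'I_d) :
  (g *m W) i (widen_ord top_multiplicity_le2 k)
  = sigma 0%N * V i (widen_ord top_multiplicity_le1 k).
Proof.
case: svd => _ [_ WW] _ _ ->; rewrite -mulmxA WW mulmx1 mxE.
rewrite (bigD1 (widen_ord top_multiplicity_le1 k)) //= big1 ?addr0.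
  by rewrite mxE /= eqxx sigma_top // mulrC.
move=> l lk; rewrite mxE /=.
have -> : ((l : nat) == k) = false.
  by apply/negbTE; apply: contra lk => /eqP E; apply/eqP/val_inj.
by rewrite mulr0.
Qed.

Lemma top_block_pairing (a b : C) :
  \sum_x1 \sum_x2 g x1 x2 * \sum_(k < d)
      (a * V x1 (widen_ord top_multiplicity_le1 k))
    * (b * W x2 (widen_ord top_multiplicity_le2 k))
  = a * b * sigma 0%N * \sum_x1 \sum_(k < d) V x1 (widen_ord top_multiplicity_le1 k) ^+ 2.
Proof.
rewrite mulr_sumr; apply: eq_bigr => x1 _; rewrite mulr_sumr.
under eq_bigr do rewrite mulr_sumr.
rewrite exchange_big; apply: eq_bigr => k _.
transitivity (a * b * V x1 (widen_ord top_multiplicity_le1 k)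
  * (g *m W) x1 (widen_ord top_multiplicity_le2 k)).
  by rewrite [in RHS]mxE !mulr_sumr; apply: eq_bigr => x2 _; ring.
by rewrite svd_top_columns; ring.
Qed.

End TopSingularBlock.

Lemma nonzero_mx_dims (R : nmodType) m n (A : 'M[R]_(m, n)) :
  A != 0 -> (0 < m)%N && (0 < n)%N.
Proof.
apply: contraR; rewrite negb_and -!leqNgt !leqn0 => dims0.
apply/eqP/matrixP => i j; case/orP: dims0 => /eqP E.
- by move: (ltn_ord i); rewrite {2}E.
- by move: (ltn_ord j); rewrite {2}E.
Qed.

Lemma sqrt_ratio_product (C : numClosedFieldType) (m1 m2 d : nat) : (0 < d)%N ->
  sqrtC (m1%:R / d%:R) * sqrtC (m2%:R / d%:R) * d%:R = sqrtC ((m1 * m2)%:R) :> C.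
Proof.
move=> d_gt0; have d_sqrt : d%:R = sqrtC (d%:R ^+ 2) :> C by rewrite sqrCK ?ler0n.
rewrite [X in _ * X = _]d_sqrt.
rewrite -!sqrtCM ?nnegrE ?divr_ge0 ?mulr_ge0 ?exprn_ge0 ?invr_ge0 ?ler0n //.
by congr sqrtC; rewrite natrM; field; rewrite pnatr_eq0 -lt0n.
Qed.

Lemma row_trunc_norm_sq (C : numClosedFieldType) m (X : 'M[C]_m) d
    (le_dm : (d <= m)%N) i :
  real_mx X -> row_trunc_norm X d i ^+ 2 = \sum_(k < d) X i (widen_ord le_dm k) ^+ 2.
Proof.
move=> X_real; rewrite /row_trunc_norm sqrtCK.
rewrite (@big_ord_narrow_cond _ _ _ _ _ xpredT (fun k => `|X i k| ^+ 2) le_dm) /=.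
by apply: eq_bigr => k _; rewrite real_normK.
Qed.

Lemma scaled_rows_observable (C : numClosedFieldType) m (X : 'M[C]_m) d
    (le_dm : (d <= m)%N) :
  (0 < d)%N -> real_mx X ->
  (forall i, row_trunc_norm X d i = sqrtC (d%:R / m%:R)) ->
  forall i, is_observable
    (clifford_op (fun k : 'I_d => sqrtC (m%:R / d%:R) * X i (widen_ord le_dm k))).
Proof.
move=> d_gt0 X_real X_rows i.
have m_gt0 : (0 < m)%N := leq_trans d_gt0 le_dm.
apply: clifford_op_observable => [k|].
  by rewrite rpredM ?X_real // ger0_real // sqrtC_ge0 divr_ge0 ?ler0n.
under eq_bigr do rewrite exprMn.
rewrite -mulr_sumr -row_trunc_norm_sq // X_rows !sqrtCK.
by field; rewrite !pnatr_eq0 -!lt0n d_gt0 m_gt0.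
Qed.

Theorem corollary1 (C : numClosedFieldType) (M1 M2 : nat)
  (g : 'M[C]_(M1, M2)) (V : 'M[C]_M1) (sigma : nat -> C) (W : 'M[C]_M2) :
  real_mx g -> g != 0 ->
  is_svd g V sigma W ->
  let d := top_multiplicity M1 M2 sigma in
  (forall i : 'I_M1, row_trunc_norm V d i = sqrtC (d%:R / M1%:R)) ->
  (forall j : 'I_M2, row_trunc_norm W d j = sqrtC (d%:R / M2%:R)) ->
  exists (n1 n2 : nat) (rho : 'M[C]_(n1 * n2))
         (A1 : 'I_M1 -> 'M[C]_n1) (A2 : 'I_M2 -> 'M[C]_n2),
    [/\ is_state rho,
        forall x1, is_observable (A1 x1),
        forall x2, is_observable (A2 x2)
      & \sum_(x1 < M1) \sum_(x2 < M2)
          g x1 x2 * \tr (rho *m kron (A1 x1) (A2 x2))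
        = sqrtC ((M1 * M2)%:R) * sigma 0%N].
Proof.
move=> _ g_nz svd d V_rows W_rows.
have /andP[M1_gt0 M2_gt0] := nonzero_mx_dims g_nz.
have d_gt0 : (0 < d)%N := top_multiplicity_gt0 sigma M1_gt0 M2_gt0.
have [[V_real _] [W_real _] _ _ _] := svd.
pose le1 := top_multiplicity_le1 M1 M2 sigma.
pose le2 := top_multiplicity_le2 M1 M2 sigma.
pose c1 : C := sqrtC (M1%:R / d%:R); pose c2 : C := sqrtC (M2%:R / d%:R).
exists (cdim d), (cdim d), (maxent C (cdim d)),
  (fun x1 => clifford_op (fun k => c1 * V x1 (widen_ord le1 k))),
  (fun x2 => clifford_op (fun k => c2 * W x2 (widen_ord le2 k))).
split.
- exact/maxent_state/cdim_gt0.
- exact: scaled_rows_observable.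
- exact: scaled_rows_observable.
under eq_bigr do under eq_bigr do rewrite clifford_correlation.
rewrite top_block_pairing //.
have V_row_sq x1 : \sum_(k < d) V x1 (widen_ord le1 k) ^+ 2 = d%:R / M1%:R.
  by rewrite -row_trunc_norm_sq // V_rows sqrtCK.
under eq_bigr do rewrite V_row_sq.
rewrite sumr_const card_ord -[_ / _ *+ _]mulr_natr divfK ?pnatr_eq0 -?lt0n //.
by rewrite mulrAC sqrt_ratio_product.
Qed.
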